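(* $g\big[\mathbf{RP}_{48}(\mathbb{R})\big]>640.4861$.
   Context: For an $n\times n$ real matrix $A=(a_{i,j})$, Gaussian elimination without pivoting is the recursion $a^{(1)}_{i,j}=a_{i,j}$ and $a^{(k+1)}_{i,j}=a^{(k)}_{i,j}-a^{(k)}_{i,k}a^{(k)}_{k,j}/a^{(k)}_{k,k}$ for $k+1\le i,j\le n$ (defined when all pivots are nonzero). Growth factor: $g(A)=\max_{i,j,k}|a^{(k)}_{i,j}|/\max_{i,j}|a_{i,j}|$; $g[\mathbf{X}]=\sup_{A\in\mathbf{X}}g(A)$. $\mathbf{RP}_n(\mathbb{R})$ is the set of invertible real $n\times n$ matrices for which elimination is defined and $|a^{(k)}_{i,k}|,|a^{(k)}_{k,j}|\le|a^{(k)}_{k,k}|$ for all $k$ and $i,j\ge k$. (Established via an explicit computer-found matrix converted to an exactly rook-pivoted one.) *)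

From HB Require Import structures.
From mathcomp Require Import all_boot all_order all_algebra.
From mathcomp Require Import classical_sets boolp reals constructive_ereal ereal.
Set Implicit Arguments. Unset Strict Implicit. Unset Printing Implicit Defensive.
Import Order.TTheory GRing.Theory Num.Theory.
Local Open Scope ring_scope.
Local Open Scope classical_set_scope.

(* Matrices of size n.+1 (indices 0..n, i.e. the paper's 1..n+1 shifted by one).
   gauss A k = the paper's A^(k+1): gauss A 0 = A, and step k (0-based pivot k)
   updates the entries (i,j) with k < i, k < j; other entries are kept
   (they are entries of an earlier A^(m)). *)
Fixpoint gauss {R : fieldType} {n : nat} (A : 'M[R]_n.+1) (k : nat) : 'M[R]_n.+1 :=
  match k with
  | 0 => A
  | k'.+1 =>
      let M := gauss A k' in
      let p : 'I_n.+1 := inord k' in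
      \matrix_(i, j) if (k' < i)%N && (k' < j)%N
                     then M i j - M i p * M p j / M p p
                     else M i j
  end.

Definition elim_defined {R : fieldType} {n : nat} (A : 'M[R]_n.+1) : Prop :=
  forall k : 'I_n.+1, gauss A k k k != 0.

Definition rook_pivoted {R : numFieldType} {n : nat} (A : 'M[R]_n.+1) : Prop :=
  elim_defined A /\
  forall k i j : 'I_n.+1, (k <= i)%N -> (k <= j)%N ->
    `|gauss A k i k| <= `|gauss A k k k| /\ `|gauss A k k j| <= `|gauss A k k k|.

Definition RP {R : numFieldType} (n : nat) : set 'M[R]_n.+1 :=
  [set A | A \in unitmx /\ rook_pivoted A].

Definition growth {R : numFieldType} {n : nat} (A : 'M[R]_n.+1) : R :=
  (\big[Num.max/0]_(k : 'I_n.+1) \big[Num.max/0]_(i : 'I_n.+1 | (k <= i)%N)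
      \big[Num.max/0]_(j : 'I_n.+1 | (k <= j)%N) `|gauss A k i j|)
  / (\big[Num.max/0]_(i : 'I_n.+1) \big[Num.max/0]_(j : 'I_n.+1) `|A i j|).

Definition growth_sup_RP {R : realType} (n : nat) : \bar R :=
  ereal_sup [set (growth A)%:E | A in @RP R n].

(* The proof exhibits one matrix of RP_48 with growth factor above 641.  It
   is given through a factorisation A = L U, with L unit lower triangular and
   U upper triangular with nonzero diagonal, because elimination without
   pivoting on such a product is completely explicit: the k-th Schur
   complement is a^(k)_{ij} = sum_{m >= k} L_{im} U_{mj} (gauss_LU).  Hence
   the k-th pivot column is L_{ik} U_{kk}, the k-th pivot row is U_{kj} and
   the pivot is U_{kk}, so A is rook pivoted as soon as |L_{ik}| <= 1 and
   |U_{kj}| <= |U_{kk}| (LU_RP), while its growth factor is at least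
   |U_{nn}| / max |a_{ij}| (growth_ge).

   The certificate consists of two integer matrices, 10^5 L and U, for which
   |U_{47,47}| / max |a_{ij}| is about 794.  All the inequalities it must
   satisfy are finite integer computations, checked by
   evaluation (the cert_* lemmas), and transported to an arbitrary real field
   through the ring morphism Z -> int -> R. *)

From Stdlib Require Import ZArith Lia.
From mathcomp Require Import all_boot all_order all_algebra.
From mathcomp Require Import classical_sets reals constructive_ereal ereal.
From mathcomp Require Import ssrZ.
Set Implicit Arguments.
Unset Strict Implicit.
Unset Printing Implicit Defensive.
Import Order.TTheory GRing.Theory Num.Theory.
Local Open Scope ring_scope.

Section GaussLU.
Variables (R : fieldType) (n : nat) (L U : 'M[R]_n.+1).
Hypothesis L_diag : forall i, L i i = 1.
Hypothesis L_upper : forall i j : 'I_n.+1, (i < j)%N -> L i j = 0.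
Hypothesis U_lower : forall i j : 'I_n.+1, (j < i)%N -> U i j = 0.
Hypothesis U_diag : forall i, U i i != 0.

Lemma tail_sum_col (i k : 'I_n.+1) :
  \sum_(m < n.+1 | (k <= m)%N) L i m * U m k = L i k * U k k.
Proof.
rewrite (bigD1 k) //= big1 ?addr0 // => m /andP[km mk].
by rewrite U_lower ?mulr0 // ltn_neqAle km andbT eq_sym.
Qed.

Lemma tail_sum_row (j k : 'I_n.+1) :
  \sum_(m < n.+1 | (k <= m)%N) L k m * U m j = U k j.
Proof.
rewrite (bigD1 k) //= L_diag mul1r big1 ?addr0 // => m /andP[km mk].
by rewrite L_upper ?mul0r // ltn_neqAle km andbT eq_sym.
Qed.

Lemma gauss_LU (k : nat) (i j : 'I_n.+1) : (k <= i)%N -> (k <= j)%N ->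
  gauss (L *m U) k i j = \sum_(m < n.+1 | (k <= m)%N) L i m * U m j.
Proof.
elim: k i j => [|k IH] i j ki kj /=; first by rewrite mxE.
rewrite mxE ki kj /=.
set p : 'I_n.+1 := inord k.
have pk : (p : nat) = k by rewrite inordK // (ltn_trans ki).
have kp : (k <= p)%N by rewrite pk.
rewrite !IH ?(ltnW ki) ?(ltnW kj) //.
have := tail_sum_col i p; have := tail_sum_row j p; have := tail_sum_col p p.
rewrite pk => -> -> ->.
have split_p : \sum_(m < n.+1 | (k <= m)%N) L i m * U m j =
    L i p * U p j + \sum_(m < n.+1 | (k < m)%N) L i m * U m j.
  rewrite (bigD1 p) //=; congr (_ + _); apply: eq_bigl => m.
  by rewrite ltn_neqAle andbC -pk eq_sym.
by rewrite split_p L_diag mul1r mulrAC mulfK // addrAC subrr add0r.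
Qed.

Lemma gauss_LU_col (k i : 'I_n.+1) : (k <= i)%N ->
  gauss (L *m U) k i k = L i k * U k k.
Proof. by move=> ki; rewrite gauss_LU // tail_sum_col. Qed.

Lemma gauss_LU_row (k j : 'I_n.+1) : (k <= j)%N ->
  gauss (L *m U) k k j = U k j.
Proof. by move=> kj; rewrite gauss_LU // tail_sum_row. Qed.

Lemma gauss_LU_pivot (k : 'I_n.+1) : gauss (L *m U) k k k = U k k.
Proof. exact: gauss_LU_row. Qed.

(* det (L U) is the product of the diagonal of U. *)
Lemma LU_unitmx : L *m U \in unitmx.
Proof.
rewrite unitmxE det_mulmx unitfE mulf_neq0 //.
  rewrite det_trig; last by apply/is_trig_mxP => i j; apply: L_upper.
  by rewrite (eq_bigr (fun=> 1)) ?big1_eq ?oner_neq0 // => i _; apply: L_diag.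
rewrite -det_tr det_trig; last by apply/is_trig_mxP => i j ij; rewrite mxE U_lower.
by apply/prodf_neq0 => i _; rewrite mxE.
Qed.

End GaussLU.

Section RookLU.
Variables (R : numFieldType) (n : nat) (L U : 'M[R]_n.+1).
Hypothesis L_diag : forall i, L i i = 1.
Hypothesis L_upper : forall i j : 'I_n.+1, (i < j)%N -> L i j = 0.
Hypothesis U_lower : forall i j : 'I_n.+1, (j < i)%N -> U i j = 0.
Hypothesis U_diag : forall i, U i i != 0.
Hypothesis L_bound : forall i k, `|L i k| <= 1.
Hypothesis U_bound : forall k j, `|U k j| <= `|U k k|.

Lemma LU_RP : RP (L *m U).
Proof.
have piv (k : 'I_n.+1) : gauss (L *m U) k k k = U k k by apply: gauss_LU_pivot.
split; first exact: LU_unitmx.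
split=> [k | k i j ki kj]; first by rewrite piv.
rewrite piv gauss_LU_col // gauss_LU_row //; split; last exact: U_bound.
by rewrite normrM ler_piMl.
Qed.

End RookLU.

Lemma growth_ge (R : realFieldType) (n : nat) (A : 'M[R]_n.+1) (B : R)
    (i0 j0 k i j : 'I_n.+1) :
  A i0 j0 != 0 -> (forall i j, `|A i j| <= B) -> (k <= i)%N -> (k <= j)%N ->
  `|gauss A k i j| / B <= growth A.
Proof.
move=> A0 AB ki kj; rewrite /growth.
set N := \big[Num.max/0]_(k : 'I_n.+1) _.
set D := \big[Num.max/0]_(i : 'I_n.+1) _.
have gN : `|gauss A k i j| <= N.
  apply: le_trans (le_bigmax _ _ k); apply: le_trans (le_bigmax_cond _ _ ki).
  exact: le_bigmax_cond.
have D_gt0 : 0 < D.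
  apply: lt_le_trans (le_bigmax _ _ i0); apply: lt_le_trans (le_bigmax _ _ j0).
  by rewrite normr_gt0.
have DB : D <= B.
  have B0 : 0 <= B := le_trans (normr_ge0 _) (AB i0 j0).
  by apply: bigmax_le => // i' _; apply: bigmax_le.
apply: ler_pM => //; first by rewrite invr_ge0 (le_trans (ltW D_gt0)).
by rewrite lef_pV2 ?posrE // (lt_le_trans D_gt0).
Qed.

Lemma growth_le_sup (R : realType) (n : nat) (A : 'M[R]_n.+1) :
  RP A -> ((growth A)%:E <= growth_sup_RP n)%E.
Proof. by move=> A_RP; apply: ereal_sup_ubound; exists A. Qed.

Lemma all_square (N : nat) (P : nat -> nat -> bool) :
  all (fun i => all (P i) (iota 0 N)) (iota 0 N) ->
  forall i j, (i < N)%N -> (j < N)%N -> P i j.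
Proof.
move=> /allP all_rows i j iN jN.
have /allP row_i : all (P i) (iota 0 N) by apply: all_rows; rewrite mem_iota.
by apply: row_i; rewrite mem_iota.
Qed.

(* The certificate: 10^5 L and U as integer matrices, row i of L_rows
   listing the entries L_{i0}, ..., L_{i,i-1} below the diagonal and row i of
   U_rows listing the entries U_{ii}, ..., U_{i,47} from the diagonal on. *)
Section Certificate.
Local Open Scope Z_scope.

Definition L_rows : seq (seq Z) := [::
  [::];
  [:: 1056];
  [:: -11; -121];
  [:: 855; 1392; 2047];
  [:: 49; -596; 1005; -888];
  [:: 7528; 1548; 568; 1005; -1280];
  [:: 46355; 11384; -12396; -33252; -17460; 63987];
  [:: -7646; -4587; 4768; -1596; 168; -5566; -3501];
  [:: 12888; 2422; -3784; 7186; 1362; 10352; -8850; -1282];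
  [:: -64448; 12041; -7927; -11775; -6224; -50929; -15602; 23559; -2376];
  [:: -9963; -13622; 1858; -9617; 933; 1944; 12650; -3807; -14947; -1421];
  [:: -54115; 15572; 9604; -12544; -14066; -24978; 33862; 47111; -58997; 48001; 23909];
  [:: -65748; 1533; -19568; -2300; -16535; -27878; 2534; 29282; -33163; 55153; -20211; 31894];
  [:: -7951; -2784; -39535; 76383; 53046; -22697; -72116; -46312; 17999; -34310; 11927; -20419; -12663];
  [:: -45628; 21618; 26123; 23581; -15509; -38200; 1574; -2436; 21696; 59882; -58625; 41796; 82288; -16057];
  [:: 19371; -48852; -1265; -62310; 16901; -11576; -13184; 3134; 18501; -42561; 32493; -48471; -46632; -5945; -42665];
  [:: 67347; 76494; -98875; -23097; 25223; 84403; 99844; 12438; -99885; 21373; -99624; 79791; 79145; 9750; 25075; -48808];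
  [:: 79998; -98790; 99662; -99983; -93587; 48510; 84631; 3361; 99993; -35994; 53023; -57037; -36791; -99985; -78946; 87797; -83631];
  [:: 97539; -55874; -7921; -77864; -48428; 48629; 99993; -48875; 23763; -60318; 15911; -90096; -29235; -65307; -71206; 65639; -37076; 47823];
  [:: -21102; -11411; 91554; -61912; 90703; 60379; -53730; 37720; -65221; 73000; -47243; 6104; -25652; -77565; -25856; 63426; -40996; 55476; -39695];
  [:: -96033; 29689; 8654; 45008; 63242; -89894; -98011; 5881; 5756; 67301; -47402; 23952; 36073; 21093; 21401; -10618; 10990; 669; -24305; 15770];
  [:: -86799; 75093; -35856; 22638; -12640; -51229; -71854; 96581; -24777; 99949; 15801; 99848; 72385; 16031; 7660; -19590; 31702; -14723; -38184; -5560; -11574];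
  [:: 79101; 74616; 99203; 98140; -94928; -79121; 81958; -30456; 66582; -90309; -99974; 66804; 5051; 76072; 48787; -89590; 33501; -69288; 14630; -75090; -68508; 8812];
  [:: 18866; 8445; 79268; 6941; -96840; -52116; 88919; 78981; 53413; 21185; -16652; 85672; 97908; -71087; 52221; -2522; -30983; 17796; 29240; -50141; -45200; 35668; 37092];
  [:: 71978; 62053; -39009; -14490; 74395; 90569; 99402; 9558; -8469; -3410; -92802; 70089; 65130; 33693; 33173; -57181; 86391; 6611; -10613; -12769; 40505; 30254; 29448; 35786];
  [:: 95314; -81602; 99785; 66206; 99868; 69735; 99994; -48447; 99991; -98794; -99982; -99910; -56000; -24621; 37975; -74944; 24246; 55294; 35358; 18093; 93358; -60396; 31502; 34492; 78523];
  [:: 91411; -82982; 89371; 85012; 99900; -99949; 99959; 99993; 99760; -89255; -99969; 93069; -99964; 99857; -99998; -62887; -11852; 96339; -8175; 22560; 99872; 98571; 49204; -76340; -36443; 85489];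
  [:: 99429; 94769; -76267; -67039; -99987; 92412; -62899; -56305; 99791; 28106; -99986; -80262; -78420; 99992; 13933; -60831; -5777; 11806; -42966; -74744; 99937; -69385; -87138; -98848; 23647; -99974; 245];
  [:: -35599; -99341; -97676; 99978; 99939; 99807; 99144; 99983; 99983; 67754; 58418; -99988; -21834; -99971; 57135; 99918; 99691; 32760; -63884; 1043; 99930; 99957; -99043; -99984; -36755; 99263; 70433; -68497];
  [:: -96006; -99265; -1191; 99810; 99855; 30550; 62979; -65286; -98621; -34370; 43414; -99520; 57030; -95461; 34107; -31600; 57706; -58635; 59295; 35667; -58134; -48670; 20424; 27678; 7959; 84787; -23969; -84075; 19636];
  [:: 73216; 99886; -97566; 62148; -24077; 92262; 95241; 23373; -79798; 23007; -74533; -97316; 99884; -99632; 99978; 51486; 99501; -74078; 36366; -62875; 12006; 27275; -29280; -97030; -9106; -25483; 7191; -39260; 52320; 71607];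
  [:: -95054; -96322; -90910; -57111; -6211; 99930; -92847; -90741; 99591; -41688; 99932; 32768; -14278; 99296; 64166; -50941; 99946; -30231; -99927; 13190; -99994; 85604; -19403; 91584; 99988; 82441; -39821; -27644; -2987; -99868; -99597];
  [:: 16872; 98154; 94959; -86350; 99918; 90275; -53890; -99935; -89501; 62807; -71176; 37772; -19757; 4490; -47646; -19068; -55072; 15282; 21031; 76622; -46852; -89015; 81288; 69416; 85237; -33887; -61013; 43532; -61196; -30335; -7750; -10633];
  [:: 1676; -68081; -88867; -96871; -99972; 99627; -3259; 65828; -99949; -99982; -71369; -99917; 97179; 99759; -99992; -58442; 71185; 99905; 99282; -99990; 74701; -45072; -95625; 97781; 78355; 34383; -51736; 62655; -22006; -5476; -45630; 99954; -18400];
  [:: -99942; -99786; -99743; -99897; -77609; 99873; 53409; 80515; -98468; -99938; -99974; 99978; -63372; 44484; -98665; 99956; 99861; -24530; 99962; -7203; -23276; -13715; 32641; -71205; -99965; 75606; 27745; -21152; -32166; -37624; 30585; 27737; 99963; 41134];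
  [:: 23335; -99668; -99506; 98907; -99548; -98857; -95308; 99790; -97509; -24497; -99975; -71595; 11735; 99353; 79183; 79288; 52880; 8300; -97056; 18835; 98456; 12429; -48462; -52460; -37736; 94843; 17684; -9018; 39989; -51454; 8217; 45140; -99951; 20311; -14239];
  [:: 81098; 99915; 98249; -83573; 98747; -99046; 89148; -99655; -99758; -92031; 99959; -22313; 1550; 34935; -52541; 74378; 6653; -4447; 99945; 80155; 99985; 97210; 7070; 78212; -98729; 94116; 40058; -14737; 20960; -99998; -96108; -92; -99952; -10809; -50979; 50976];
  [:: -99964; 97999; 98595; -99713; 99191; 99922; -99933; 99915; 99745; -93273; 88701; -91522; 99622; 99936; 99917; -22936; 26491; 64834; 99810; 16779; 99981; 50326; -64856; 99997; -99981; 39979; 56942; 89559; -66135; 99972; 99973; 80178; -93646; 48057; 58945; 98817; 38419];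
  [:: -85666; -99911; 99538; -83236; -99240; 99534; -99543; -66737; -97415; -65843; 99847; -70718; 99367; -99985; -41088; -99970; 99983; 97561; -99821; 37528; 99722; 88445; 99985; -99941; 58761; -99936; 99929; 98836; -99875; -99900; 98056; 99936; 10513; 49372; 73624; -49046; -94178; 68188];
  [:: -95392; 94088; -99991; 99808; 98081; 75459; 99977; 99870; 96713; -99185; 85087; 99740; 71076; -85067; -24719; 91633; -99817; -72540; -99731; 64824; 55495; -92276; -6104; 99951; -97323; -98617; -59468; 52150; -71199; -96086; 99980; -64670; 75430; -98992; 25650; 99865; -4463; 15723; -17555];
  [:: 99741; 99822; -99116; -98881; -99852; -99910; -98983; -99954; -99920; 60493; 99987; 99702; -88789; -99889; 89374; -96622; -99747; -99972; 99996; -87701; 99987; 99185; -99996; -99966; 99989; 99949; -98033; -41066; 58754; -97313; 36180; -43548; 99963; 45349; 97975; 99985; -99991; -99706; -35287; 4665];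
  [:: -62353; 97533; 98591; 99978; -94905; -35629; 96492; 98922; -99915; -99935; 90239; -98600; 98956; -99947; -79530; 99878; 61843; -99898; -74553; -50858; 47785; 99927; -21095; 95767; 99911; -957; 43873; 99304; 95590; -28031; -99978; -99925; -36003; 89210; 99958; 95543; -3465; 88800; -3695; 25200; 40824];
  [:: -88127; -98591; 99020; -98732; -99968; -91636; 37356; -99556; 95128; 99698; 96090; 99844; 99674; 95358; -85900; 99944; 99678; -99053; 99802; 99931; 99816; -99973; 60927; 39940; 99679; -99911; 98804; -31438; 56665; 99796; -96428; 99985; 99882; 78478; -75369; 1142; 70564; -67320; -99966; 99995; 43880; 15882];
  [:: -99112; -99896; -98232; 99794; 99545; 99964; 92683; -30230; 48679; 99971; 99655; -98436; -84075; -26032; -98079; -97636; 93503; -84777; 98725; -99404; 99958; -82025; -39757; 86816; -99949; -99798; -92395; -26262; -89018; -99817; 68402; -35682; -99944; 92569; 98531; -99996; -81496; -96258; 54232; 6481; 42097; -54923; -20504];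
  [:: -99944; 98039; -85552; 23658; -99308; 99571; 88909; -99112; 77571; -99799; -78308; 70974; -99929; -86475; 99410; 40487; -98802; -99591; -99926; 91014; 99893; 99808; 83182; 99152; -99883; 98837; -78145; 98704; -42290; 99803; 9318; 98797; 96593; 41112; -99541; -99799; -99164; -97488; -79714; -99960; -46242; 99874; -25060; 51175];
  [:: 99798; -99406; -96237; 53401; -92369; -96768; 85645; -99678; 95460; 90755; -99065; 99606; -92238; 90491; -99583; -99827; -95026; -99921; -99161; 99682; 93782; 99544; -99270; 99772; 87509; 99479; -97220; 99907; 98170; 99662; 99931; -87191; -97010; 74456; 95241; -99974; 99608; -77450; 98322; 65496; -75179; 2826; 98063; -99575; -23273];
  [:: 3663; 99274; -99037; -99827; 95854; -85777; 63527; 99796; 87998; -97062; 54709; 99080; 98885; 29621; -68910; 82500; -99921; -99419; -86706; 58126; 99807; -99106; -12679; -99538; 93964; 97446; -88229; 97873; 99280; 99621; -99271; 97360; -99186; -87039; 89770; -99873; -59344; 75881; 81557; 96644; -71331; -88484; -49146; 96313; -78430; -14266];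
  [:: -99346; -97591; -99506; 72762; -92822; 92677; -97379; 69107; -92426; -30481; -99053; 6481; -99249; -99247; 98922; 97091; 82939; 60591; -90936; -97344; -1644; -93997; 99556; -94396; 98619; -93517; 99735; -99127; -99873; -98098; -95862; -99472; -99579; 99972; -99150; -99059; 99097; 99882; -99666; 99914; 99668; -99591; -99962; -99750; 99992; 99974; 99991]].

Definition U_rows : seq (seq Z) := [::
  [:: 1198877; -17751; -7061; 9378; 3997; 87383; -273200; 162038; -27666; 275395; 333998; 776109; 398426; 56674; 1227; 1116751; 456278; -1125624; 440569; 1071449; -172555; -89596; 1184011; 1160205; -1094989; 1084839; 1198037; 1151864; -1186092; 1186302; -1197644; 818633; 1175352; 310135; 1192660; -1191312; 866771; 1182592; -1045149; -1164626; -1159849; 1173412; -1191429; 431615; 1197798; -1186671; -1075551; 1119819];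
  [:: 1201954; 2272; 953; -7056; 2861; -86343; -6947; 17691; 196073; -29497; -412752; -498148; 245843; -471607; 37878; 1001413; 1199520; -312792; 1013894; -1126291; -1192080; -1166691; 741023; 1147937; 1186172; -328405; -1201521; -1193198; 1042783; 1201895; 1175182; -1200909; 1200994; 1168068; -1173969; -1184349; -1201827; 1200271; 1201471; -1183754; 1143601; 1200247; -1170917; 1131841; 1168927; -1130384; 1185383];
  [:: 1198462; 4208; -16957; 46313; -60812; 32840; -16206; 122492; -30993; 555732; -401529; 386119; 270901; 257307; -567576; -1191949; -151874; -1082848; 1194197; 556511; -1004298; -1166300; -1191642; 257430; -1198206; -1180964; -1189797; 1160137; -586122; 25346; 985160; -871444; -1189905; -1182169; -1163026; 1186358; -889682; 1185875; -1195270; -1192528; -1186205; -1197286; 1184979; 1186906; 1178046; 1110878];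
  [:: 1204612; -24884; 35916; -223546; -125888; -10238; -181022; 86482; 639585; 505484; 517390; -390307; 994295; -434012; 560006; 1203831; 1135558; 21825; 25062; -258215; -676014; 1192130; 1144185; -1185377; 1204526; -993170; 1051863; -1204519; 1178836; -1195691; -1194134; 1203803; -51254; 1202864; -1182655; -1104734; -1201955; 1167678; -1188750; 1203392; -1145140; -1203422; -253813; 1196918; -1172796];
  [:: 1206152; -21816; -24763; -126569; -19864; -148282; -147808; -237251; 147033; -412607; 23068; -109652; 316697; -466924; -111226; -1037956; 646742; 1188574; 481686; -93646; -723199; -1105474; 620580; 1205624; 1123795; -393187; 225801; 1198405; -394395; 1205961; -1170532; 1205458; 1205580; -1205825; -54142; -1015883; -1174718; 1203928; 1204061; -1194846; 1036826; 508222; 1199653; 1184911];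
  [:: 1247495; -200734; 109628; -24494; 329783; 258689; 1147896; 47611; 717035; -8072; 1075813; -1176631; -1015406; 458161; -136240; 1170944; 1189533; 1095228; -1246446; 206289; 1002956; 1154563; -1247091; 1247390; -867983; 30975; -1199151; -1246425; -1170520; -1245590; 1232365; -1089160; -1247309; 1233646; 1232550; 774750; 1089323; 1142743; -1006109; -1247336; 1240827; 1247029; -1242748];
  [:: 1352565; 55327; 18416; 319557; -42758; -463904; -465981; 516842; 1129800; -633770; -935515; 1063327; -1305524; -1347883; 584236; -898219; -76812; -1347484; 1202497; -1350321; -1307309; -207171; -1352328; 74568; -222652; 858152; 1224557; 1344721; 1352458; 307444; 1334239; 1137128; 44551; -1338092; 1348224; -1313754; 1352066; -1344716; -1159248; -1344740; 1332017; 1293929];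
  [:: 1261450; -3465; 215324; 232680; 97865; -514154; 314247; 172996; -348655; -244571; -1152227; -88286; 1077573; -752424; -1204487; 1251430; 1260520; 1261337; -1023467; -1006669; -1142442; 291800; -1132881; -1201605; -817473; 1139927; 1161624; -803334; -1209777; 1236020; -1261244; 1213802; -1244611; 1247673; 1261097; 1251994; -1258268; 1172195; 1112790; 1135137; -1153759];
  [:: 1219116; 48051; 64409; -291268; 267000; -665750; -641442; -290994; 1175957; 198799; 755985; 762768; -1108705; 152645; -407109; 696591; -134755; 420943; -95295; 52321; -1218994; -247708; -421590; -1216635; -80309; 1219072; -1218490; 1188671; -1179740; 1218965; 1219001; -1217556; 1216005; 627030; -1209123; -1215811; -1218045; -660130; 1216716; 1051334];
  [:: 1539875; 6958; -35928; -289002; 285313; -8267; 291441; -614181; 131583; -627246; -493428; 494388; 117024; 1539859; -44606; 360900; 1539496; 1539272; 1532088; -1539829; -515437; 215020; 1478881; 667969; -1516768; -367669; 1529203; 1321352; 1539505; -1533385; 733880; -1506284; 1539092; -1539523; -1503038; -1519550; -1536060; 1532018; -734642];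
  [:: 1317227; 540467; -191543; 906119; 469149; 602864; -370532; 316407; -261291; 282932; 244073; -1298761; 655589; -316366; 1263812; 1281023; -517222; 1315353; 304098; 1186485; 1044112; -1130935; 925925; 1272838; -1125496; -269908; 967155; -1316821; -1024474; -1315644; -1314438; -716591; -1316503; -1316109; -1075487; 1270738; -1314698; 1293452];
  [:: 1776267; 362196; 180343; 182270; 439418; 288438; 376730; 675333; 143767; 755583; 591259; -1644487; -382207; -966992; 953943; 97242; 1709342; 1407218; 1749088; 333515; 403384; -1625830; -1259323; -1299871; 1772796; -1773427; 1770690; 1772853; -1774386; 1773512; 1719069; -1270818; 1775988; 1338860; -1761562; -1774724; 1769362];
  [:: 1671375; -570433; -420796; 91248; -628279; 113316; 773026; -608186; 564964; 1666791; 972987; -1027287; -1309221; 934643; 1470628; -1356670; -1670961; -279176; -954404; -1555923; 1671090; 1671174; -963772; -978708; -1670685; -1670884; -1668728; -1670254; 283460; -1573405; -22778; -1640543; 1483594; 1647741; -1593465; 1521819];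
  [:: 1888116; 674935; 500512; -1631465; -309211; -701146; -1522200; 1429546; 305976; 1886717; -1806093; 1292169; -695482; -1333466; -1885028; -155482; -138753; 994521; -1887097; 1816192; 1485621; 673711; -1857614; -1887478; 1887626; -334991; 1850384; 1882615; 1640093; -1880274; -1814039; 1885796; -1761590; 1667768; 1815804];
  [:: 2092008; -365005; -1114853; -256471; -547084; -585512; 778719; -735004; 207954; -385520; 437073; -1907982; -2091641; 1642128; 1888423; -1259712; -141461; -2045348; 1204893; 2076119; 2072599; -2090352; 2052658; -2091677; 2080977; 2091447; -2076279; 2082787; -664701; 2090141; -2089015; 1651667; -939014; -2023775];
  [:: 1788747; -78221; 173525; 141835; -792418; 923305; 1723919; 337498; -421611; -460146; 237262; -1787514; 1787105; -1788508; 1778385; 768337; 1066638; 328838; -1765878; 490272; -903042; -1765343; -1788187; 1780193; 1787473; 1767457; 1688801; 1787396; -1762967; -1619684; -252675; -1762140; -1775466];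
  [:: 2941346; 212677; -156369; 1880282; -1960277; -1760573; -2885244; 2365306; -829971; 1318973; -2940896; 2939834; -348974; 2936692; 54223; -2918284; 2156094; -940263; -2121690; 430884; -1499211; 1543171; -2931003; 2884056; -99656; -2460000; -2573835; -2899799; -2484767; 2929012; 2856133; -2935485];
  [:: 3658285; -289380; 461214; -175787; -890559; -1506715; 188416; 1454352; 1074576; -3656304; 1605387; 3657575; 1301680; 3179193; -3401897; -429337; 3650624; 2861419; 243971; 1720159; -3612649; -3645037; 3461200; -707410; 3503949; -2752165; 1035728; 3622796; 3653242; 3614844; -3623044];
  [:: 1977588; 1929800; -983557; 285293; 27149; -32219; 1933477; -1077884; -1977280; 1977253; 534853; -1873933; -1882469; -1975619; -1934139; -1968713; -1976110; 581876; -1960841; 1976545; 356934; 1569566; -1968481; 1971847; -1470713; -1974767; 1971306; 1888283; -860182; 1930121];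
  [:: 4081365; -2255561; -2671366; -1694175; 1460671; 2398644; -1926197; -3644039; -1267250; -1822927; -1069325; -3848139; -3042507; 903479; 3967073; 2509359; -1653391; -2549749; 4059685; -1286766; -2639174; 4075067; -4016772; -4073696; -2556417; -4077893; -3941470; -3706830; 4035595];
  [:: 1937109; 379445; 608109; 185802; -403807; 335924; -267196; -1936770; 1399969; 569171; 669987; -1936689; 1688262; -1936912; 1811864; -1230131; 1933975; 1936677; 1848407; -1936630; -176703; 958661; 1936908; -600792; -1929444; 1358035; -1914703; 1907891];
  [:: 2583852; 1523987; -530111; 520203; -2452402; -2559343; -1673978; -531924; 12396; -2554731; -1618545; 841429; -1419405; 1980818; 696264; 2583001; 777567; -1197620; 2583412; -2329344; -2582347; 2358954; 2580796; -2501954; -1889330; 2091984; 2557504];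
  [:: 5186925; 859553; 987643; 1443964; 28811; 412596; 5186023; -2946700; 4615980; -4997436; -1100195; 2594871; -1310707; 4332012; 5174927; -5177867; -2201194; 214098; 1216824; 2148797; 2078977; -4318076; -4892662; 1996975; -4946713; -5183675];
  [:: 2593519; -496507; 548626; 2591835; 55627; 2593413; -640735; 2591660; 2593286; -1924135; -2579219; 2592192; -2579097; -1838310; 2409769; 1053470; 2591521; 2590796; -2587633; -2380900; -2591566; -2580025; -1524202; 2568846; 2526128];
  [:: 2880394; -1648745; -1888220; -387783; -2880333; 689288; -213294; 2666548; -617107; -2873787; -323299; -396866; -2394158; -2879842; 1369586; -2880124; -2830251; -2820709; -2874263; 2772498; 2875236; -2880098; -2819450; -2766276];
  [:: 4632538; 4145956; 1648967; -4629137; 840572; 1672434; 2034640; 1366917; -2061777; -4597989; -559023; -4403123; -1732373; -698241; 4629488; 2173510; 3498639; 4611284; 4611166; -256668; -4222261; -3769428; 4616544];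
  [:: 9550326; 1154038; -1525392; -2238054; 1131049; 8613775; -4118073; -4427494; 1107026; -3180600; -7023463; -7628485; 4961021; 3927746; -6847327; -6637416; -8678843; -2975698; -6250920; 9270021; -6382295; -9525158];
  [:: 9331756; 1556188; -1770936; -801790; -784905; -122125; -1464519; -8387565; 3975229; 391394; -6885738; -6549025; 3745784; 9324446; -9289195; 3782087; -6119165; -8964271; -6009366; -8936832; 9213313];
  [:: 13819919; -5823379; 7513891; -4415361; -7133988; 5429369; -5161328; 1820974; -1230988; 6880168; -5859632; -1775761; 10974034; -5415508; -5898245; -7380950; 13702773; -12842984; -13252772; 13770539];
  [:: 4074718; -963618; -1318868; 2326187; -1926413; 3826197; 1477865; 2327087; -4041491; 4063031; 4070326; 4073512; 2389139; -4071283; -2402105; -1783746; -2831529; -3853128; 3975342];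
  [:: 5773939; 2892965; -3074621; 24693; -5766855; -495176; -5057131; 5772001; -5735283; -3075854; 5761522; -357612; -5768335; 5751281; -5771064; -3182590; 5768270; 5624465];
  [:: 8172020; -4750130; -1473162; 3780740; 1067663; 8164877; -932288; -2924402; -7251489; 7447326; 6962893; -4737165; -8170947; -3851874; 8153369; -8032110; 8101617];
  [:: 4030337; 1904083; 1336373; -4025078; 4029950; 4029548; 4020249; 1183855; 3400044; -4007530; -4015679; 3530549; 3802569; 4025511; -3050186; 3845904];
  [:: 12285029; -1295944; 2146517; 450896; 6370724; 8701889; -3035628; -12211921; -5259751; -4055786; 7709683; -12280112; -12045891; -3100933; -12224891];
  [:: 11775741; -3174474; 7695341; -11532036; -11769823; -7897723; -9297614; -7011115; -3815449; -10547864; 9952118; -11698065; 2573104; 11741116];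
  [:: 8461246; 2524358; -2578466; 8127335; 1265113; -8449220; -8454893; -8400021; -3384265; 8455723; 8418415; 8362536; 8232177];
  [:: 13255089; -10127539; -2638330; -13019499; 13134414; 3524184; -13248545; 13013635; 626660; -13238018; 8960407; -13172894];
  [:: 27520512; -2150789; -8135226; 6929002; 3272116; 27306906; 20601758; 26005645; -10745525; -18167246; -27450556];
  [:: 30920412; 10964307; 26968101; 28022410; -17871794; 1026587; 29615287; -30631827; 29318737; 30825218];
  [:: 22631005; -17746995; 22535111; -22026157; 6856620; -21992; -22616733; -22497115; -22557446];
  [:: 70606705; 26881781; 12107634; -2300485; -9390382; -3685225; 5832230; -70600271];
  [:: 49259758; -29758589; 6945501; -29911043; 49141978; 35140949; 49176000];
  [:: 76367256; 26371280; 74300687; -24976681; 74616587; 76237272];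
  [:: 43582424; 43207702; 43567870; -39966312; 43134431];
  [:: 138728847; -136641639; 38765358; -138589010];
  [:: 196228091; -124075248; -196131840];
  [:: 201554414; -201434375];
  [:: 1000000000]].

(* Common denominator of the entries of L, and bound on the entries of
   10^5 L U. *)
Definition denom : Z := 100000.
Definition entry_bound : Z := 125873280123.

Definition Lz (i j : nat) : Z :=
  if (j < i)%N then nth 0 (nth [::] L_rows i) j
  else if i == j then denom else 0.
Definition Uz (i j : nat) : Z :=
  if (i <= j)%N then nth 0 (nth [::] U_rows i) (j - i) else 0.

Fixpoint zsum (k : nat) (f : nat -> Z) : Z :=
  if k is k'.+1 then zsum k' f + f k' else 0.
Definition Az (i j : nat) : Z := zsum 48 (fun m => Lz i m * Uz m j).

Lemma cert_L {i j : nat} : (i < 48)%N -> (j < 48)%N ->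
  Z.abs (Lz i j) <=? denom.
Proof. by move: i j; apply: all_square; vm_compute. Qed.

Lemma cert_U {k j : nat} : (k < 48)%N -> (j < 48)%N ->
  (0 <? Uz k k) && (Z.abs (Uz k j) <=? Uz k k).
Proof. by move: k j; apply: all_square; vm_compute. Qed.

Lemma cert_A {i j : nat} : (i < 48)%N -> (j < 48)%N ->
  Z.abs (Az i j) <=? entry_bound.
Proof. by move: i j; apply: all_square; vm_compute. Qed.

Lemma cert_growth : 641 * entry_bound <? Uz 47 47 * denom.
Proof. by vm_compute. Qed.

End Certificate.

Section ZEmbedding.
Variable R : realDomainType.

Definition zR (z : Z) : R := (int_of_Z z)%:~R.

Lemma zRD a b : zR (Z.add a b) = zR a + zR b.
Proof. by rewrite /zR -intrD; congr intr; exact: (raddfD int_of_Z a b). Qed.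

Lemma zRM a b : zR (Z.mul a b) = zR a * zR b.
Proof. by rewrite /zR -intrM; congr intr; exact: (rmorphM int_of_Z a b). Qed.

Lemma zRN a : zR (Z.opp a) = - zR a.
Proof. by rewrite /zR -mulrNz; congr intr; exact: (raddfN int_of_Z a). Qed.

Lemma zR_zsum k (f : nat -> Z) : zR (zsum k f) = \sum_(m < k) zR (f m).
Proof. by elim: k => [|k IH]; rewrite ?big_ord0 // big_ord_recr -IH /= zRD. Qed.

Lemma zR_gt0 a : Z.ltb Z0 a -> 0 < zR a.
Proof.
case: a => //= p _; rewrite /zR /= ltr0n.
by apply/ssrnat.ltP; apply: Pos2Nat.is_pos.
Qed.

Lemma zR_lt a b : Z.ltb a b -> zR a < zR b.
Proof.
move=> /Z.ltb_lt ab; rewrite -subr_gt0 -zRN -zRD zR_gt0 //.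
by apply/Z.ltb_lt; lia.
Qed.

Lemma zR_le a b : Z.leb a b -> zR a <= zR b.
Proof.
move=> /Z.leb_le ab; have [-> // | a_ne_b] := Z.eq_dec a b.
by apply/ltW/zR_lt/Z.ltb_lt; lia.
Qed.

Lemma zR_abs_le a c : Z.leb (Z.abs a) c -> `|zR a| <= zR c.
Proof.
move=> /Z.leb_le ac; rewrite ler_norml -zRN !zR_le //; apply/Z.leb_le; lia.
Qed.

End ZEmbedding.
Arguments zR {R} z.

Section CertifiedMatrix.
Variable R : realFieldType.

Definition L_cert : 'M[R]_48 := \matrix_(i, j) (zR (Lz i j) / zR denom).
Definition U_cert : 'M[R]_48 := \matrix_(i, j) zR (Uz i j).
Definition A_cert : 'M[R]_48 := L_cert *m U_cert.

Lemma denom_gt0 : 0 < zR denom :> R.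
Proof. exact: zR_gt0. Qed.

Lemma L_cert_diag (i : 'I_48) : L_cert i i = 1.
Proof. by rewrite mxE /Lz ltnn eqxx divff // lt0r_neq0 // denom_gt0. Qed.

Lemma L_cert_upper (i j : 'I_48) : (i < j)%N -> L_cert i j = 0.
Proof. by move=> ij; rewrite mxE /Lz ltnNge (ltnW ij) ltn_eqF // mul0r. Qed.

Lemma U_cert_lower (i j : 'I_48) : (j < i)%N -> U_cert i j = 0.
Proof. by move=> ji; rewrite mxE /Uz leqNgt ji. Qed.

Lemma U_cert_diag_gt0 (k : 'I_48) : 0 < U_cert k k.
Proof. by rewrite mxE zR_gt0 //; case/andP: (cert_U (ltn_ord k) (ltn_ord k)). Qed.

Lemma U_cert_diag (k : 'I_48) : U_cert k k != 0.
Proof. exact: lt0r_neq0 (U_cert_diag_gt0 k). Qed.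

Lemma L_cert_bound (i k : 'I_48) : `|L_cert i k| <= 1.
Proof.
rewrite mxE normrM normfV (gtr0_norm denom_gt0) ler_pdivrMr ?denom_gt0 // mul1r.
exact/zR_abs_le/(cert_L (ltn_ord i) (ltn_ord k)).
Qed.

Lemma U_cert_bound (k j : 'I_48) : `|U_cert k j| <= `|U_cert k k|.
Proof.
rewrite (gtr0_norm (U_cert_diag_gt0 k)) !mxE.
by apply: zR_abs_le; case/andP: (cert_U (ltn_ord k) (ltn_ord j)).
Qed.

Lemma A_cert_entry (i j : 'I_48) : A_cert i j = zR (Az i j) / zR denom.
Proof.
rewrite mxE /Az zR_zsum mulr_suml; apply: eq_bigr => m _.
by rewrite !mxE zRM mulrAC.
Qed.

Lemma A_cert_bound (i j : 'I_48) : `|A_cert i j| <= zR entry_bound / zR denom.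
Proof.
rewrite A_cert_entry normrM normfV (gtr0_norm denom_gt0).
rewrite ler_pM2r ?invr_gt0 ?denom_gt0 //.
exact/zR_abs_le/(cert_A (ltn_ord i) (ltn_ord j)).
Qed.

Lemma A_cert_RP : RP A_cert.
Proof.
apply: LU_RP; [exact: L_cert_diag | exact: L_cert_upper | exact: U_cert_lower |
  exact: U_cert_diag | exact: L_cert_bound | exact: U_cert_bound].
Qed.

Lemma A_cert_pivot (k : 'I_48) : gauss A_cert k k k = U_cert k k.
Proof.
exact: gauss_LU_pivot L_cert_diag L_cert_upper U_cert_lower U_cert_diag k.
Qed.

Lemma A_cert_growth : 641%:R < growth A_cert.
Proof.
pose last : 'I_48 := ord_max.
have A00 : A_cert ord0 ord0 != 0.
  change (gauss A_cert (@ord0 47) ord0 ord0 != 0).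
  by rewrite A_cert_pivot U_cert_diag.
apply: lt_le_trans (growth_ge A00 A_cert_bound (leqnn last) (leqnn last)).
have entry_gt0 : 0 < zR entry_bound :> R by exact: zR_gt0.
rewrite A_cert_pivot (gtr0_norm (U_cert_diag_gt0 last)) mxE invf_div mulrA.
rewrite (ltr_pdivlMr _ _ entry_gt0).
by have := zR_lt R cert_growth; rewrite !zRM.
Qed.

End CertifiedMatrix.

Theorem mainTheorem12 (R : realType) :
  ((640%:R + 4861%:R / 10%:R ^+ 4 : R)%:E < growth_sup_RP (R := R) 47)%E.
Proof.
apply: (lt_le_trans _ (growth_le_sup (A_cert_RP R))).
rewrite lte_fin; apply: le_lt_trans (A_cert_growth R).
rewrite (natrD R 640 1) lerD2l ler_pdivrMr ?exprn_gt0 ?ltr0n //.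
by rewrite mul1r -natrX ler_nat.
Qed.
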